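(* For every sum-bucket game $\mathcal R$, every sequence of greedy moves starting from an arbitrary routing is finite and ends at a Nash-routing; in particular every sum-bucket game has a Nash-routing.
   Context: A routing game $(\mathbf N,G,\mathcal P)$: players $\{1,\dots,N\}$ ($N\ge1$), a finite graph $G$, and for each player $i$ a nonempty finite set $\mathcal P_i$ of paths (each with at least one edge) from $u_i$ to $v_i$; $\mathcal P=\bigcup_i\mathcal P_i$, $L=\max_{p\in\mathcal P}|p|$. A routing is $\mathbf p=[p_1,\dots,p_N]$ with $p_i\in\mathcal P_i$. Sum-bucket game: for $k=0,\dots,\lceil\lg L\rceil$ the bucket $B_k$ is the set of paths in $\mathcal P$ with length in $[2^k,2^{k+1})$, $B(q)$ is the bucket index of path $q$; normalized length $\overline D_q=2^{B(q)+1}-1$; $\overline C_{e,q}(\mathbf p)$ is the number of players $j$ with $e\in p_j$ and $B(p_j)=B(q)$; $\overline C_q(\mathbf p)=\max_{e\in q}\overline C_{e,q}(\mathbf p)$; player cost $pc_i(\mathbf p)=\overline C_{p_i}(\mathbf p)+\overline D_{p_i}$. A greedy move by player $i$ replaces $p_i$ by some $p_i'\in\mathcal P_i$ so that $pc_i$ strictly decreases, other paths unchanged. A Nash-routing is a routing from which no greedy move is possible. *)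

From mathcomp Require Import all_boot.
Set Implicit Arguments. Unset Strict Implicit. Unset Printing Implicit Defensive.

(* A finite graph: vertices V, edges E (both finite types) and a traversal
   relation [step e x y] : edge e may be traversed from x to y.
   (Undirected graphs: step e x y iff {x,y} are the ends of e; directed:
   only from tail to head.) *)
Section Routing.
Variables (V E : finType) (step : E -> V -> V -> bool).

Fixpoint is_walk (x : V) (p : seq E) (y : V) : bool :=
  match p with
  | [::] => x == y
  | e :: p' => [exists z : V, step e x z && is_walk z p' y]
  end.

Variable N : nat.
Variable Pset : 'I_N -> seq (seq E).

Definition routingT := {ffun 'I_N -> seq E}.
Definition is_routing (r : routingT) : Prop := forall i, r i \in Pset i.

(* bucket index: B(q) = floor(lg |q|), i.e. |q| in [2^B, 2^(B+1)) *)
Definition bucket (q : seq E) : nat := trunc_log 2 (size q).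
Definition Dbar (q : seq E) : nat := 2 ^ (bucket q).+1 - 1.
Definition Cbar_e (r : routingT) (e : E) (q : seq E) : nat :=
  #|[set j : 'I_N | (e \in r j) && (bucket (r j) == bucket q)]|.
Definition Cbar (r : routingT) (q : seq E) : nat :=
  \max_(e <- q) Cbar_e r e q.
Definition pc (r : routingT) (i : 'I_N) : nat := Cbar r (r i) + Dbar (r i).

Definition greedy_move (r r' : routingT) : Prop :=
  exists i : 'I_N,
    r' i \in Pset i /\ (forall j, j != i -> r' j = r j) /\ pc r' i < pc r i.

Definition nash_routing (r : routingT) : Prop :=
  is_routing r /\ ~ (exists r', greedy_move r r').

End Routing.

From Stdlib Require Import Classical.
From mathcomp Require Import all_boot zify.

(* The sum-bucket game admits an ordinal potential of
   exponential type:
       Phi(r) = sum_j (N+1)^(pc_j(r)).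
   When player i makes a greedy move, only congestions in the bucket of its
   new path can grow, and every player j <> i whose cost grows ends up with a
   cost at most the new cost of i (same bucket, same normalized length, shared
   edge).  Hence every other cost is bounded by max(old cost, new cost of i),
   while the cost of i strictly drops; with base N+1 > N this forces Phi to
   drop strictly. *)

Set Implicit Arguments. Unset Strict Implicit.

Lemma potential_decrease (I : finType) (b : nat) (c c' : I -> nat) (i : I) :
  #|I| < b -> c' i < c i ->
  (forall j, j != i -> c' j <= maxn (c j) (c' i)) ->
  \sum_j b ^ c' j < \sum_j b ^ c j.
Proof.
move=> Ib dec others.
have b0 : 0 < b by apply: leq_ltn_trans Ib.
have I0 : 0 < #|I| by apply/card_gt0P; exists i.
rewrite (bigD1 i) // [X in _ < X](bigD1 i) //=.
set X := b ^ c' i; set S := \sum_(j | j != i) b ^ c j.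
have X0 : 0 < X by rewrite expn_gt0 b0.
have rest : \sum_(j | j != i) b ^ c' j <= S + #|I|.-1 * X.
  apply: (@leq_trans (\sum_(j | j != i) (b ^ c j + X))).
    apply: leq_sum => j /others cj; apply: leq_trans (leq_pexp2l b0 cj) _.
    case: (leqP (c j) (c' i)) => cji.
    - exact: leq_addl.
    - exact: leq_addr.
  by rewrite big_split /= sum_nat_const cardC1.
have top : b * X <= b ^ c i by rewrite -expnS leq_pexp2l.
(* new sum <= S + #|I| * X < S + b * X <= old sum *)
nia.
Qed.

Section BucketGame.
Variables (E : finType) (N : nat).
Implicit Types (r : routingT E N) (q : seq E).

Lemma Cbar_e_le r e q : e \in q -> Cbar_e r e q <= Cbar r q.
Proof. by move=> eq; apply: (leq_bigmax_seq e). Qed.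

Lemma Cbar_e_unchanged r r' i e q :
  (forall k, k != i -> r' k = r k) ->
  ~~ ((e \in r' i) && (bucket (r' i) == bucket q)) ->
  Cbar_e r' e q <= Cbar_e r e q.
Proof.
move=> same not_i; apply/subset_leq_card/subsetP => k; rewrite !inE.
by case: (eqVneq k i) => [->|ki]; [rewrite (negbTE not_i)|rewrite same].
Qed.

Lemma pc_other_le r r' i j :
  (forall k, k != i -> r' k = r k) -> j != i ->
  pc r' j <= maxn (pc r j) (pc r' i).
Proof.
move=> same ji; rewrite /pc (same j ji); set q := r j.
have [bq|bq] := eqVneq (bucket (r' i)) (bucket q).
- have Dq : Dbar (r' i) = Dbar q by rewrite /Dbar bq.
  rewrite Dq -addn_maxl leq_add2r.
  apply/bigmax_leqP_seq => e eq _; rewrite leq_max.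
  have [ei|ei] := boolP (e \in r' i).
  + have -> : Cbar_e r' e q = Cbar_e r' e (r' i) by rewrite /Cbar_e bq.
    by rewrite (Cbar_e_le r' ei) orbT.
  + have unchanged := Cbar_e_unchanged (e:=e) (q:=q) same.
    by rewrite (leq_trans (unchanged _) (Cbar_e_le r eq)) // (negbTE ei).
- apply: leq_trans (leq_maxl _ _); rewrite leq_add2r.
  apply/bigmax_leqP_seq => e eq _.
  have unchanged := Cbar_e_unchanged (e:=e) (q:=q) same.
  by rewrite (leq_trans (unchanged _) (Cbar_e_le r eq)) // (negbTE bq) andbF.
Qed.

Definition potential r : nat := \sum_(j < N) N.+1 ^ pc r j.

Lemma potential_greedy (Pset : 'I_N -> seq (seq E)) r r' :
  greedy_move Pset r r' -> potential r' < potential r.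
Proof.
move=> [i [_ [same better]]]; apply: potential_decrease better _.
  by rewrite card_ord.
by move=> j; apply: pc_other_le.
Qed.

Lemma greedy_move_routing (Pset : 'I_N -> seq (seq E)) r r' :
  is_routing Pset r -> greedy_move Pset r r' -> is_routing Pset r'.
Proof.
move=> rok [i [r'i [same _]]] j.
by case: (eqVneq j i) => [->|ji] //; rewrite same.
Qed.

Lemma routing_exists (Pset : 'I_N -> seq (seq E)) :
  (forall i, Pset i != [::]) -> exists r, is_routing Pset r.
Proof.
move=> ne; exists [ffun i => head [::] (Pset i)] => i; rewrite ffunE.
by move: (ne i); case: (Pset i) => //= q s _; rewrite mem_head.
Qed.

End BucketGame.

Section DecreasingPotential.
Variables (T : Type) (R : T -> T -> Prop) (phi : T -> nat).
Hypothesis phi_dec : forall x y, R x y -> phi y < phi x.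

Lemma no_infinite_chain (f : nat -> T) : ~ (forall n, R (f n) (f n.+1)).
Proof.
move=> chain.
have drop n : phi (f n) + n <= phi (f 0).
  elim: n => [|n IH]; first by rewrite addn0.
  by apply: leq_trans IH; rewrite addnS -addSn leq_add2r phi_dec.
by have := drop (phi (f 0)).+1; rewrite addnS ltnNge leq_addl.
Qed.

Lemma terminal_exists (P : T -> Prop) :
  (forall x y, P x -> R x y -> P y) ->
  forall x, P x -> exists2 y, P y & ~ (exists z, R y z).
Proof.
move=> Pinv x; move: {2}(phi x) (leqnn (phi x)) => n; elim: n x => [|n IH] x.
all: have [[y xy]|stuck] := classic (exists y, R x y); last by exists x.
- by move=> x0; have := phi_dec xy; rewrite ltnNge (leq_trans x0 (leq0n _)).
- move=> xn Px; apply: (IH y) (Pinv x y Px xy).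
  by rewrite -ltnS (leq_trans (phi_dec xy) xn).
Qed.

End DecreasingPotential.

Theorem mainTheorem10
  (V E : finType) (step : E -> V -> V -> bool)
  (N : nat) (u v : 'I_N -> V) (Pset : 'I_N -> seq (seq E))
  (HN : 1 <= N)
  (Hne : forall i, Pset i != [::])
  (Hpath : forall i q, q \in Pset i -> (0 < size q) && is_walk step (u i) q (v i)) :
  (* every greedy-move sequence from a routing is finite *)
  (forall f : nat -> routingT E N,
      is_routing Pset (f 0) ->
      ~ (forall n, greedy_move Pset (f n) (f n.+1))) /\
  (* a greedy sequence that cannot be extended ends at a Nash-routing *)
  (forall r : routingT E N,
      is_routing Pset r -> ~ (exists r', greedy_move Pset r r') ->
      nash_routing Pset r) /\
  (* every sum-bucket game has a Nash-routing *)
  (exists r : routingT E N, nash_routing Pset r).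
Proof.
have dec := @potential_greedy E N Pset.
split; [|split].
- by move=> f _; apply: no_infinite_chain dec f.
- by move=> r rok stuck; split.
- have [r0 r0ok] := routing_exists Hne.
  have [r rok stuck] := terminal_exists dec (@greedy_move_routing E N Pset) r0ok.
  by exists r; split.
Qed.
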